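(* Let $\Sigma$ be a simply connected minimal surface in $\mathbb{R}^3$, parametrized (up to translations) by the conformal harmonic immersion \[ \mathbf{X}(\zeta)=\Big(\mathrm{Re}\int\phi_1(\zeta)\,d\zeta,\ \mathrm{Re}\int\phi_2(\zeta)\,d\zeta,\ \mathrm{Re}\int\phi_3(\zeta)\,d\zeta\Big), \] where $\zeta$ is a conformal coordinate and the holomorphic null curve $\phi=(\phi_1,\phi_2,\phi_3)$ is given in terms of Weierstrass data $(G(\zeta),\Psi(\zeta)\,d\zeta)$ by \[ \phi=\Big(\tfrac12(1-G^2)\Psi,\ \tfrac{i}{2}(1+G^2)\Psi,\ G\Psi\Big). \] For each $\theta\in(-\frac{\pi}{2},\frac{\pi}{2})$ define the holomorphic curve \[ \widetilde{\phi}=(\widetilde{\phi}_0,\widetilde{\phi}_1,\widetilde{\phi}_2,\widetilde{\phi}_3)=\Big(\frac{\sin\theta}{2}\Big(1+\frac{G^2}{\cos^2\theta}\Big)\Psi,\ \frac{\cos\theta}{2}\Big(1-\frac{G^2}{\cos^2\theta}\Big)\Psi,\ \frac{i}{2}\Big(1+\frac{G^2}{\cos^2\theta}\Big)\Psi,\ G\Psi\Big) \] (so that $\widetilde{\phi}_0=-i(\sin\theta)\,\widetilde{\phi}_2$). Then there exists a degenerate minimal surface $\Sigma^{\tan\theta}$ in $\mathbb{R}^4$, parametrized (up to translations) by the conformal harmonic immersion \[ \mathbf{X}^{\tan\theta}(\zeta)=\Big(\mathrm{Re}\int\widetilde{\phi}_0\,d\zeta,\ \mathrm{Re}\int\widetilde{\phi}_1\,d\zeta,\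 \mathrm{Re}\int\widetilde{\phi}_2\,d\zeta,\ \mathrm{Re}\int\widetilde{\phi}_3\,d\zeta\Big). \]
   Context: For a conformal harmonic immersion $\mathbf{X}:\Sigma\to\mathbb{R}^4$ with local conformal coordinate $\zeta$, its Gauss map is $\mathcal{G}(\zeta)=[\partial\mathbf{X}/\partial\zeta]\in\mathbb{CP}^3$, taking values in the quadric $\{z_0^2+z_1^2+z_2^2+z_3^2=0\}$. The minimal surface is called degenerate if the image of its Gauss map lies in a hyperplane of $\mathbb{CP}^3$. *)

From Stdlib Require Import Reals.
From Coquelicot Require Import Coquelicot.

Open Scope R_scope.

Fixpoint rsum (n : nat) (f : nat -> R) : R :=
  match n with O => 0 | S m => rsum m f + f m end.
Fixpoint csum (n : nat) (f : nat -> C) : C :=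
  match n with O => RtoC 0 | S m => Cplus (csum m f) (f m) end.

(** [gamma] is a continuous path, lying in [U] on [0,1]
    (defined on all of R, only its restriction to [0,1] matters). *)
Definition path_in (U : C -> Prop) (gamma : R -> C) : Prop :=
  (forall t, continuous gamma t) /\ (forall t, 0 <= t <= 1 -> U (gamma t)).

Definition path_connected (U : C -> Prop) : Prop :=
  forall z w, U z -> U w ->
    exists gamma, path_in U gamma /\ gamma 0 = z /\ gamma 1 = w.

Definition loops_contractible (U : C -> Prop) : Prop :=
  forall gamma : R -> C, path_in U gamma -> gamma 0 = gamma 1 ->
    exists H : R * R -> C,
      (forall p, continuous H p) /\
      (forall s t, 0 <= s <= 1 -> 0 <= t <= 1 -> U (H (s, t))) /\
      (forall s, 0 <= s <= 1 -> H (s, 0) = gamma s) /\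
      (forall s, 0 <= s <= 1 -> H (s, 1) = H (0, 1)) /\
      (forall t, 0 <= t <= 1 -> H (0, t) = H (1, t)).

Definition simply_connected_domain (U : C -> Prop) : Prop :=
  (exists z, U z) /\ open U /\ path_connected U /\ loops_contractible U.

Definition discrete_in (U P : C -> Prop) : Prop :=
  forall z, U z -> exists eps : posreal,
    forall w, w <> z -> Cmod (Cminus w z) < eps -> ~ P w.

Definition holomorphic_on (U : C -> Prop) (f : C -> C) : Prop :=
  forall z, U z -> @ex_derive C_AbsRing C_NormedModule f z.

Definition primitive_on (U : C -> Prop) (phi F : C -> C) : Prop :=
  forall z, U z -> @is_derive C_AbsRing C_NormedModule F z (phi z).

Definition px (f : C -> R) (z : C) : R :=
  Derive (fun t => f (t, snd z)) (fst z).
Definition py (f : C -> R) (z : C) : R :=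
  Derive (fun t => f (fst z, t)) (snd z).

Definition rdiff_at (f : C -> R) (z : C) : Prop :=
  differentiable_pt (fun x y => f (x, y)) (fst z) (snd z).

Definition C2_on (U : C -> Prop) (f : C -> R) : Prop :=
  forall z, U z ->
    rdiff_at f z /\ rdiff_at (px f) z /\ rdiff_at (py f) z /\
    continuous (px (px f)) z /\ continuous (py (px f)) z /\
    continuous (px (py f)) z /\ continuous (py (py f)) z.

(** A map [X : U -> R^n], [X z = (X 0 z, ..., X (n-1) z)]. *)
Definition harmonic_on (U : C -> Prop) (n : nat) (X : nat -> C -> R) : Prop :=
  forall k, (k < n)%nat -> C2_on U (X k) /\
    forall z, U z -> px (px (X k)) z + py (py (X k)) z = 0.

Definition conformal_on (U : C -> Prop) (n : nat) (X : nat -> C -> R) : Prop :=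
  forall z, U z ->
    rsum n (fun k => px (X k) z ^ 2) = rsum n (fun k => py (X k) z ^ 2) /\
    rsum n (fun k => px (X k) z * py (X k) z) = 0.

Definition immersion_on (U : C -> Prop) (n : nat) (X : nat -> C -> R) : Prop :=
  forall z, U z -> forall a b : R,
    (forall k, (k < n)%nat -> a * px (X k) z + b * py (X k) z = 0) ->
    a = 0 /\ b = 0.

Definition conformal_harmonic_immersion (U : C -> Prop) (n : nat)
    (X : nat -> C -> R) : Prop :=
  harmonic_on U n X /\ conformal_on U n X /\ immersion_on U n X.

(** dX_k/dzeta = (X_x - i X_y)/2 ; the Gauss map is [dX/dzeta] in CP^(n-1). *)
Definition dzeta (f : C -> R) (z : C) : C :=
  Cmult (RtoC (/ 2)) (Cminus (RtoC (px f z)) (Cmult Ci (RtoC (py f z)))).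

(** Degenerate: the image of the Gauss map lies in a hyperplane of CP^(n-1):
    some nonzero linear form vanishes on dX/dzeta everywhere on U. *)
Definition degenerate_on (U : C -> Prop) (n : nat) (X : nat -> C -> R) : Prop :=
  exists a : nat -> C,
    (exists k, (k < n)%nat /\ a k <> RtoC 0) /\
    forall z, U z -> csum n (fun k => Cmult (a k) (dzeta (X k) z)) = RtoC 0.

(** [X] is, up to translations, Re \int phi : X_k = Re F_k with F_k' = phi_k. *)
Definition Re_integral_param (U : C -> Prop) (n : nat) (phi : nat -> C -> C)
    (X : nat -> C -> R) : Prop :=
  exists F : nat -> C -> C,
    forall k, (k < n)%nat ->
      primitive_on U (phi k) (F k) /\ forall z, U z -> X k z = Re (F k z).

(** phi = (phi_1, phi_2, phi_3) stored at indices 0, 1, 2. *)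
Definition weierstrass_phi (G Psi : C -> C) (k : nat) (z : C) : C :=
  match k with
  | O => Cmult (Cmult (RtoC (/ 2)) (Cminus (RtoC 1) (Cmult (G z) (G z)))) (Psi z)
  | 1%nat => Cmult (Cmult (Cmult (RtoC (/ 2)) Ci) (Cplus (RtoC 1) (Cmult (G z) (G z)))) (Psi z)
  | _ => Cmult (G z) (Psi z)
  end.

Definition tilde_phi (theta : R) (G Psi : C -> C) (k : nat) (z : C) : C :=
  let q := Cdiv (Cmult (G z) (G z)) (RtoC (cos theta ^ 2)) in
  match k with
  | O => Cmult (Cmult (RtoC (sin theta / 2)) (Cplus (RtoC 1) q)) (Psi z)
  | 1%nat => Cmult (Cmult (RtoC (cos theta / 2)) (Cminus (RtoC 1) q)) (Psi z)
  | 2%nat => Cmult (Cmult (Cmult (RtoC (/ 2)) Ci) (Cplus (RtoC 1) q)) (Psi z)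
  | _ => Cmult (G z) (Psi z)
  end.

(* The curve [tilde phi] is [M phi] for a constant complex 4x3 matrix [M = tilde_mx (sin theta)
   (cos theta)]; off the poles of [G] this is the formula in terms of [G] and [Psi], while on all of
   [U] it is holomorphic because [phi] is, and [X~ = Re (M F)] for primitives [F] of [phi].
   Since [sin^2 + cos^2 = 1], [M] preserves the complex bilinear form ([M^T M = I]); as
   [dX~/dzeta = M dX/dzeta], the null (conformality) condition and the non-vanishing of
   [dX/dzeta] (immersion) carry over from [X] to [X~]. The rows satisfy
   [tphi_0 + i sin theta tphi_2 = 0], a fixed hyperplane containing the Gauss map. *)

From Stdlib Require Import Reals Lra Lia Classical.
From Coquelicot Require Import Coquelicot.
Open Scope R_scope.

Lemma sqrt2_lt_2 : sqrt 2 < 2.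
Proof. pose proof (sqrt_sqrt 2 ltac:(lra)); pose proof (sqrt_pos 2); nra. Qed.

Lemma Cmod_le_2Rmax (w : C) : Cmod w <= 2 * Rmax (Rabs (fst w)) (Rabs (snd w)).
Proof.
  apply (Rle_trans _ _ _ (Cmod_2Rmax w)), Rmult_le_compat_r.
  - apply (Rle_trans _ _ _ (Rabs_pos (fst w))), Rmax_l.
  - apply Rlt_le, sqrt2_lt_2.
Qed.

Lemma is_derive_Re_diff_pt (F : C -> C) (z l : C) :
  is_derive F z l ->
  differentiable_pt_lim (fun x y => Re (F (x, y))) (fst z) (snd z) (Re l) (- Im l).
Proof.
  intros [_ Hd] eps.
  assert (Hdom := Hd z (fun P HP => HP) (pos_div_2 eps)).
  apply locally_C in Hdom.
  destruct z as [x y]; apply locally_2d_locally.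
  revert Hdom; apply filter_imp; intros [u v] Hw; simpl in *.
  unfold norm, minus, plus, opp, scal in Hw; simpl in Hw.
  change (abs ?w) with (Cmod w) in Hw; change (mult ?a ?b) with (Cmult a b) in Hw.
  match type of Hw with Cmod ?W <= _ => set (D := W) in Hw end.
  replace (Re (F (u, v)) - Re (F (x, y)) - (Re l * (u - x) + - Im l * (v - y)))
    with (Re D) by (unfold D, Re, Im; simpl; ring).
  assert (Hm := Cmod_le_2Rmax ((u, v) + - (x, y))%C); simpl in Hm.
  apply (Rle_trans _ _ _ (re_le_Cmod D)), (Rle_trans _ _ _ Hw).
  pose proof (cond_pos eps). unfold Rminus. nra.
Qed.

Lemma open_locally_2d (U : C -> Prop) (z : C) :
  open U -> U z -> locally_2d (fun u v => U (u, v)) (fst z) (snd z).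
Proof.
  intros HU Hz; apply locally_2d_locally.
  apply (filter_imp U); [now intros [u v] | exact (HU z Hz)].
Qed.

Section RealPartOfPrimitive.

Variables (U : C -> Prop) (F f : C -> C) (X : C -> R).
Hypothesis HU : open U.
Hypothesis HF : forall w, U w -> is_derive F w (f w).
Hypothesis HX : forall w, U w -> X w = Re (F w).

Lemma Re_primitive_diff_pt (w : C) : U w ->
  differentiable_pt_lim (fun x y => X (x, y)) (fst w) (snd w) (Re (f w)) (- Im (f w)).
Proof.
  intros Hw.
  apply differentiable_pt_lim_ext with (fun x y => Re (F (x, y))).
  - apply locally_2d_impl with (2 := open_locally_2d U w HU Hw).
    apply locally_2d_forall; intros u v Huv; symmetry; exact (HX _ Huv).
  - exact (is_derive_Re_diff_pt F w (f w) (HF w Hw)).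
Qed.

Lemma Re_primitive_partials (w : C) : U w ->
  rdiff_at X w /\ px X w = Re (f w) /\ py X w = - Im (f w).
Proof.
  intros Hw; pose proof (Re_primitive_diff_pt w Hw) as Hd.
  split; [now exists (Re (f w)), (- Im (f w)) |].
  exact (differentiable_pt_lim_unique _ _ _ _ _ Hd).
Qed.

Lemma dzeta_Re_primitive (w : C) : U w -> dzeta X w = (f w / 2)%C.
Proof.
  intros Hw; unfold dzeta.
  destruct (Re_primitive_partials w Hw) as [_ [-> ->]]; destruct (f w) as [a b].
  apply injective_projections; simpl; field.
Qed.

End RealPartOfPrimitive.

Lemma continuous_eq_on_open (U : C -> Prop) (f g : C -> R) (z : C) :
  open U -> U z -> (forall w, U w -> f w = g w) -> continuous g z -> continuous f z.
Proof.
  intros HU Hz Hfg; apply continuous_ext_loc.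
  apply (filter_imp U); [intros w Hw; symmetry; now apply Hfg | exact (HU z Hz)].
Qed.

Lemma is_derive_Cmult_l (F : C -> C) (z l m : C) :
  is_derive F z l -> is_derive (fun w => m * F w)%C z (m * l)%C.
Proof.
  intros HF.
  apply (filterdiff_ext_lin (K := C_AbsRing) (U := AbsRing_NormedModule C_AbsRing)
    (V := C_NormedModule) _ (fun y => scal m (scal y l))).
  - apply (filterdiff_scal_r_fct (K := C_AbsRing) (U := AbsRing_NormedModule C_AbsRing)
      (V := C_NormedModule) m F); [exact Cmult_comm | exact HF].
  - intros y; change (m * (y * l) = y * (m * l))%C; ring.
Qed.

Section SecondDerivatives.

Variables (U : C -> Prop) (F f d : C -> C) (X : C -> R).
Hypothesis HU : open U.
Hypothesis HF : forall w, U w -> is_derive F w (f w).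
Hypothesis Hf : forall w, U w -> is_derive f w (d w).
Hypothesis HX : forall w, U w -> X w = Re (F w).

Lemma px_Re_primitive_partials (w : C) : U w ->
  rdiff_at (px X) w /\ px (px X) w = Re (d w) /\ py (px X) w = - Im (d w).
Proof.
  apply (Re_primitive_partials U f d); auto.
  intros v Hv; exact (proj1 (proj2 (Re_primitive_partials U F f X HU HF HX v Hv))).
Qed.

(* [py X = - Im f = Re (i f)], the real part of a function with derivative [i d]. *)
Lemma py_Re_primitive_partials (w : C) : U w ->
  rdiff_at (py X) w /\ px (py X) w = - Im (d w) /\ py (py X) w = - Re (d w).
Proof.
  intros Hw.
  destruct (Re_primitive_partials U (fun v => Ci * f v)%C (fun v => Ci * d v)%C (py X))
    with (w := w) as [Hdiff [Hx Hy]]; auto.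
  - intros v Hv; exact (is_derive_Cmult_l f v (d v) Ci (Hf v Hv)).
  - intros v Hv; rewrite (proj2 (proj2 (Re_primitive_partials U F f X HU HF HX v Hv))).
    destruct (f v) as [a b]; simpl; ring.
  - rewrite Hx, Hy; destruct (d w) as [a b]; simpl.
    split; [exact Hdiff | split; ring].
Qed.

Lemma Re_primitive_harmonic (w : C) : U w -> px (px X) w + py (py X) w = 0.
Proof.
  intros Hw; rewrite (proj1 (proj2 (px_Re_primitive_partials w Hw))),
    (proj2 (proj2 (py_Re_primitive_partials w Hw))); ring.
Qed.

Lemma C2_on_Re_primitive :
  (forall w, U w -> continuous (fun v => Re (d v)) w /\ continuous (fun v => Im (d v)) w) ->
  C2_on U X.
Proof.
  intros Hd w Hw; destruct (Hd w Hw) as [Hre Him].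
  assert (Him' : continuous (fun v => - Im (d v)) w)
    by exact (continuous_opp (V := R_NormedModule) _ w Him).
  assert (Hre' : continuous (fun v => - Re (d v)) w)
    by exact (continuous_opp (V := R_NormedModule) _ w Hre).
  assert (Hpx := px_Re_primitive_partials); assert (Hpy := py_Re_primitive_partials).
  split; [exact (proj1 (Re_primitive_partials U F f X HU HF HX w Hw)) |].
  split; [exact (proj1 (Hpx w Hw)) |]; split; [exact (proj1 (Hpy w Hw)) |].
  split; [| split; [| split]].
  - apply (continuous_eq_on_open U _ _ w HU Hw (fun v Hv => proj1 (proj2 (Hpx v Hv))) Hre).
  - apply (continuous_eq_on_open U _ _ w HU Hw (fun v Hv => proj2 (proj2 (Hpx v Hv))) Him').
  - apply (continuous_eq_on_open U _ _ w HU Hw (fun v Hv => proj1 (proj2 (Hpy v Hv))) Him').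
  - apply (continuous_eq_on_open U _ _ w HU Hw (fun v Hv => proj2 (proj2 (Hpy v Hv))) Hre').
Qed.

Lemma C2_on_continuous_second_derivative : C2_on U X ->
  forall w, U w -> continuous (fun v => Re (d v)) w /\ continuous (fun v => Im (d v)) w.
Proof.
  intros HC w Hw; destruct (HC w Hw) as [_ [_ [_ [Hxx [Hxy _]]]]].
  split.
  - apply (continuous_eq_on_open U _ _ w HU Hw) with (2 := Hxx).
    intros v Hv; symmetry; exact (proj1 (proj2 (px_Re_primitive_partials v Hv))).
  - apply (continuous_eq_on_open U _ _ w HU Hw)
      with (2 := continuous_opp (V := R_NormedModule) _ w Hxy).
    intros v Hv; rewrite (proj2 (proj2 (px_Re_primitive_partials v Hv))).
    unfold opp; simpl; ring.
Qed.

End SecondDerivatives.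

Definition mx_apply (n : nat) (M : nat -> nat -> C) (v : nat -> C) (k : nat) : C :=
  csum n (fun j => (M k j * v j)%C).

Definition mx_map (n : nat) (M : nat -> nat -> C) (f : nat -> C -> C) (k : nat) (w : C) : C :=
  mx_apply n M (fun j => f j w) k.

Lemma csum_ext (n : nat) (f g : nat -> C) :
  (forall j, (j < n)%nat -> f j = g j) -> csum n f = csum n g.
Proof.
  induction n as [|n IH]; intros Hfg; cbn [csum]; [reflexivity |].
  rewrite (Hfg n) by lia; rewrite IH; [reflexivity |].
  intros j Hj; apply Hfg; lia.
Qed.

Lemma mx_apply_ext (n : nat) (M : nat -> nat -> C) (v w : nat -> C) (k : nat) :
  (forall j, (j < n)%nat -> v j = w j) -> mx_apply n M v k = mx_apply n M w k.
Proof. intros Hvw; apply csum_ext; intros j Hj; now rewrite Hvw. Qed.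

Lemma mx_apply_Cdiv_r (n : nat) (M : nat -> nat -> C) (v : nat -> C) (a : C) (k : nat) :
  mx_apply n M (fun j => v j / a)%C k = (mx_apply n M v k / a)%C.
Proof.
  unfold mx_apply, Cdiv; induction n as [|n IH]; cbn [csum]; rewrite ?IH; ring.
Qed.

Lemma is_derive_mx_map (n : nat) (M : nat -> nat -> C) (F : nat -> C -> C) (f : nat -> C)
    (k : nat) (z : C) :
  (forall j, (j < n)%nat -> is_derive (F j) z (f j)) ->
  is_derive (mx_map n M F k) z (mx_apply n M f k).
Proof.
  unfold mx_map, mx_apply; induction n as [|n IH]; intros HF; cbn [csum].
  - exact (is_derive_const (K := C_AbsRing) (V := C_NormedModule) _ z).
  - apply (is_derive_plus (K := C_AbsRing) (V := C_NormedModule)).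
    + apply IH; intros j Hj; apply HF; lia.
    + apply is_derive_Cmult_l, HF; lia.
Qed.

Lemma continuous_mx_map (n : nat) (M : nat -> nat -> C) (d : nat -> C -> C) (k : nat) (z : C) :
  (forall j, (j < n)%nat ->
     continuous (fun w => Re (d j w)) z /\ continuous (fun w => Im (d j w)) z) ->
  continuous (fun w => Re (mx_map n M d k w)) z /\
  continuous (fun w => Im (mx_map n M d k w)) z.
Proof.
  unfold mx_map, mx_apply; induction n as [|n IH]; intros Hd; cbn [csum].
  - split; apply continuous_const.
  - destruct IH as [IHre IHim]; [intros j Hj; apply Hd; lia |].
    destruct (Hd n ltac:(lia)) as [Hre Him].
    split.
    + apply continuous_ext with (fun w => plus (Re (csum n (fun j => M k j * d j w)%C))
        (plus (scal (Re (M k n)) (Re (d n w))) (scal (- Im (M k n)) (Im (d n w))))).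
      * intros w; unfold plus, scal, Re, Im; simpl; unfold mult; simpl; ring.
      * apply (continuous_plus (V := R_NormedModule)); [exact IHre |].
        apply (continuous_plus (V := R_NormedModule));
          apply (continuous_scal_r (V := R_NormedModule)); assumption.
    + apply continuous_ext with (fun w => plus (Im (csum n (fun j => M k j * d j w)%C))
        (plus (scal (Re (M k n)) (Im (d n w))) (scal (Im (M k n)) (Re (d n w))))).
      * intros w; unfold plus, scal, Re, Im; simpl; unfold mult; simpl; ring.
      * apply (continuous_plus (V := R_NormedModule)); [exact IHim |].
        apply (continuous_plus (V := R_NormedModule));
          apply (continuous_scal_r (V := R_NormedModule)); assumption.
Qed.

Section ConstantLinearImage.

Variables (U : C -> Prop) (n : nat) (M : nat -> nat -> C) (phi F : nat -> C -> C)
  (X : nat -> C -> R).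
Hypothesis HU : open U.
Hypothesis Hphi : forall j, (j < n)%nat -> holomorphic_on U (phi j).
Hypothesis HF : forall j, (j < n)%nat ->
  primitive_on U (phi j) (F j) /\ forall z, U z -> X j z = Re (F j z).

Let dphi (j : nat) (w : C) : C := C_derive (phi j) w.

Let is_derive_dphi (j : nat) (w : C) : (j < n)%nat -> U w -> is_derive (phi j) w (dphi j w).
Proof. intros Hj Hw; apply C_derive_correct; [exact w | exact (Hphi j Hj w Hw)]. Qed.

Lemma holomorphic_mx_map (k : nat) : holomorphic_on U (mx_map n M phi k).
Proof.
  intros w Hw; eexists; apply is_derive_mx_map; intros j Hj; exact (is_derive_dphi j w Hj Hw).
Qed.

Lemma Re_integral_param_mx_map (m : nat) :
  Re_integral_param U m (mx_map n M phi) (fun k w => Re (mx_map n M F k w)).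
Proof.
  exists (mx_map n M F); intros k _; split; [| reflexivity].
  intros w Hw; apply is_derive_mx_map; intros j Hj; exact (proj1 (HF j Hj) w Hw).
Qed.

Lemma dzeta_mx_map (k : nat) (z : C) : U z ->
  dzeta (fun w => Re (mx_map n M F k w)) z = mx_apply n M (fun j => dzeta (X j) z) k.
Proof.
  intros Hz; rewrite (dzeta_Re_primitive U (mx_map n M F k) (mx_map n M phi k)); auto.
  - rewrite (mx_apply_ext _ _ _ (fun j => phi j z / 2)%C), mx_apply_Cdiv_r; [reflexivity |].
    intros j Hj; apply (dzeta_Re_primitive U (F j)); auto; apply (HF j Hj).
  - intros w Hw; apply is_derive_mx_map; intros j Hj; exact (proj1 (HF j Hj) w Hw).
Qed.

(* Continuity of [phi'] (automatic for holomorphic functions) would need Cauchy's integral formula;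
   instead the second derivatives of the image are combinations of those of [X], which are
   continuous by hypothesis. *)
Lemma harmonic_mx_map (m : nat) : harmonic_on U n X ->
  harmonic_on U m (fun k w => Re (mx_map n M F k w)).
Proof.
  intros HX k _.
  assert (HFt : forall w, U w -> is_derive (mx_map n M F k) w (mx_map n M phi k w))
    by (intros w Hw; apply is_derive_mx_map; intros j Hj; exact (proj1 (HF j Hj) w Hw)).
  assert (Hphit : forall w, U w -> is_derive (mx_map n M phi k) w (mx_map n M dphi k w))
    by (intros w Hw; apply is_derive_mx_map; intros j Hj; exact (is_derive_dphi j w Hj Hw)).
  split; [| exact (Re_primitive_harmonic U _ _ _ _ HU HFt Hphit (fun w _ => eq_refl))].
  apply (C2_on_Re_primitive U _ _ _ _ HU HFt Hphit (fun w _ => eq_refl)).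
  intros w Hw; apply continuous_mx_map; intros j Hj.
  exact (C2_on_continuous_second_derivative U (F j) (phi j) (dphi j) (X j) HU (proj1 (HF j Hj))
    (fun v Hv => is_derive_dphi j v Hj Hv) (proj2 (HF j Hj)) (proj1 (HX j Hj)) w Hw).
Qed.

End ConstantLinearImage.

Lemma rsum_ext (n : nat) (f g : nat -> R) :
  (forall j, (j < n)%nat -> f j = g j) -> rsum n f = rsum n g.
Proof.
  induction n as [|n IH]; intros Hfg; cbn [rsum]; [reflexivity |].
  rewrite (Hfg n) by lia; rewrite IH; [reflexivity |].
  intros j Hj; apply Hfg; lia.
Qed.

Lemma rsum_0 (n : nat) : rsum n (fun _ => 0) = 0.
Proof. induction n as [|n IH]; cbn [rsum]; [| rewrite IH]; ring. Qed.

Lemma rsum_plus (n : nat) (f g : nat -> R) :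
  rsum n (fun j => f j + g j) = rsum n f + rsum n g.
Proof. induction n as [|n IH]; cbn [rsum]; [| rewrite IH]; ring. Qed.

Lemma rsum_nonneg (n : nat) (f : nat -> R) :
  (forall j, (j < n)%nat -> 0 <= f j) -> 0 <= rsum n f.
Proof.
  induction n as [|n IH]; intros Hf; cbn [rsum]; [lra |].
  assert (0 <= f n) by (apply Hf; lia).
  enough (0 <= rsum n f) by lra; apply IH; intros j Hj; apply Hf; lia.
Qed.

Lemma rsum_pos (n k : nat) (f : nat -> R) :
  (forall j, (j < n)%nat -> 0 <= f j) -> (k < n)%nat -> 0 < f k -> 0 < rsum n f.
Proof.
  induction n as [|n IH]; intros Hf Hk Hfk; cbn [rsum]; [lia |].
  assert (0 <= f n) by (apply Hf; lia).
  destruct (Nat.eq_dec k n) as [-> | Hkn].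
  - enough (0 <= rsum n f) by lra; apply rsum_nonneg; intros j Hj; apply Hf; lia.
  - enough (0 < rsum n f) by lra.
    apply IH; [intros j Hj; apply Hf; lia | lia | exact Hfk].
Qed.

Lemma rsum_sq_lin_comb (n : nat) (u v : nat -> R) (a b : R) :
  rsum n (fun j => (a * u j + b * v j) ^ 2) =
  a ^ 2 * rsum n (fun j => u j ^ 2) + 2 * a * b * rsum n (fun j => u j * v j)
  + b ^ 2 * rsum n (fun j => v j ^ 2).
Proof. induction n as [|n IH]; cbn [rsum]; [| rewrite IH]; ring. Qed.

Lemma dzeta_eq0 (f : C -> R) (z : C) : dzeta f z = 0%C <-> px f z = 0 /\ py f z = 0.
Proof.
  unfold dzeta; split.
  - intros H; assert (H1 := f_equal fst H); assert (H2 := f_equal snd H); simpl in H1, H2.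
    split; lra.
  - intros [-> ->]; apply injective_projections; simpl; ring.
Qed.

Lemma csum_dzeta_sq (n : nat) (X : nat -> C -> R) (z : C) :
  csum n (fun k => dzeta (X k) z ^ 2)%C =
  ((rsum n (fun k => px (X k) z ^ 2) - rsum n (fun k => py (X k) z ^ 2)) / 4,
   - rsum n (fun k => px (X k) z * py (X k) z) / 2).
Proof.
  induction n as [|n IH]; cbn [csum rsum]; [| rewrite IH; unfold dzeta];
    apply injective_projections; simpl; field.
Qed.

Lemma null_iff_conformal_at (n : nat) (X : nat -> C -> R) (z : C) :
  csum n (fun k => dzeta (X k) z ^ 2)%C = 0%C <->
  rsum n (fun k => px (X k) z ^ 2) = rsum n (fun k => py (X k) z ^ 2) /\
  rsum n (fun k => px (X k) z * py (X k) z) = 0.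
Proof.
  rewrite csum_dzeta_sq; split.
  - intros H; assert (H1 := f_equal fst H); assert (H2 := f_equal snd H).
    cbn [fst snd RtoC] in H1, H2.
    split; lra.
  - intros [H1 H2]; rewrite H1, H2; apply injective_projections; simpl; field.
Qed.

Lemma conformal_on_iff_null (U : C -> Prop) (n : nat) (X : nat -> C -> R) :
  conformal_on U n X <-> forall z, U z -> csum n (fun k => dzeta (X k) z ^ 2)%C = 0%C.
Proof.
  split; intros H z Hz; apply null_iff_conformal_at, H, Hz.
Qed.

(* A null vector [u - i v] has [|u| = |v|] and [u . v = 0], so [u] and [v] are independent
   unless both vanish. *)
Lemma immersion_on_of_null (U : C -> Prop) (n : nat) (X : nat -> C -> R) :
  (forall z, U z -> csum n (fun k => dzeta (X k) z ^ 2)%C = 0%C /\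
     exists k, (k < n)%nat /\ dzeta (X k) z <> 0%C) ->
  immersion_on U n X.
Proof.
  intros H z Hz a b Hab.
  destruct (H z Hz) as [Hnull [k [Hk Hnz]]].
  apply null_iff_conformal_at in Hnull; destruct Hnull as [Heq Horth].
  assert (Hpos : 0 < rsum n (fun j => px (X j) z ^ 2 + py (X j) z ^ 2)).
  { apply (rsum_pos n k); [intros j _; nra | exact Hk |].
    destruct (Req_dec (px (X k) z) 0) as [Hx | Hx]; [| nra].
    destruct (Req_dec (py (X k) z) 0) as [Hy | Hy]; [| nra].
    exfalso; apply Hnz, dzeta_eq0; auto. }
  rewrite rsum_plus, <- Heq in Hpos.
  assert (Hzero := rsum_sq_lin_comb n (fun j => px (X j) z) (fun j => py (X j) z) a b).
  rewrite (rsum_ext _ _ (fun _ => 0)), rsum_0, Horth, <- Heq in Hzero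
    by (intros j Hj; rewrite Hab by exact Hj; ring).
  set (S := rsum n (fun j => px (X j) z ^ 2)) in *.
  assert (Hab2 : (a ^ 2 + b ^ 2) * S = 0) by lra.
  apply Rmult_integral in Hab2; destruct Hab2 as [Hab2 | HS]; [split; nra | lra].
Qed.

Lemma immersion_on_dzeta_nonzero (U : C -> Prop) (n : nat) (X : nat -> C -> R) (z : C) :
  immersion_on U n X -> U z -> exists k, (k < n)%nat /\ dzeta (X k) z <> 0%C.
Proof.
  intros HI Hz; apply NNPP; intros Hnone.
  destruct (HI z Hz 1 0) as [H10 _]; [| lra].
  intros k Hk; destruct (Ceq_dec (dzeta (X k) z) 0) as [H0 | H0]; [| exfalso; eauto].
  apply dzeta_eq0 in H0; destruct H0 as [-> _]; ring.
Qed.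

Lemma conformal_immersion_of_dzeta_map (U : C -> Prop) (n m : nat) (M : nat -> nat -> C)
    (X Y : nat -> C -> R) :
  (forall v : nat -> C,
     csum m (fun k => mx_apply n M v k ^ 2)%C = csum n (fun j => v j ^ 2)%C) ->
  (forall v : nat -> C, (exists j, (j < n)%nat /\ v j <> 0%C) ->
     exists k, (k < m)%nat /\ mx_apply n M v k <> 0%C) ->
  (forall k z, U z -> dzeta (Y k) z = mx_apply n M (fun j => dzeta (X j) z) k) ->
  conformal_on U n X -> immersion_on U n X -> conformal_on U m Y /\ immersion_on U m Y.
Proof.
  intros Hnull Hinj HY HXc HXi.
  assert (HYnull : forall z, U z -> csum m (fun k => dzeta (Y k) z ^ 2)%C = 0%C).
  { intros z Hz.
    rewrite (csum_ext _ _ (fun k => mx_apply n M (fun j => dzeta (X j) z) k ^ 2)%C)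
      by (intros k _; now rewrite HY).
    rewrite Hnull; exact (proj1 (conformal_on_iff_null U n X) HXc z Hz). }
  split; [exact (proj2 (conformal_on_iff_null U m Y) HYnull) |].
  apply immersion_on_of_null; intros z Hz; split; [exact (HYnull z Hz) |].
  destruct (Hinj _ (immersion_on_dzeta_nonzero U n X z HXi Hz)) as [k [Hk Hnz]].
  exists k; split; [exact Hk | now rewrite HY].
Qed.

Lemma degenerate_on_of_dzeta_map (U : C -> Prop) (n m : nat) (M : nat -> nat -> C)
    (X Y : nat -> C -> R) (a : nat -> C) :
  (exists k, (k < m)%nat /\ a k <> 0%C) ->
  (forall v : nat -> C, csum m (fun k => a k * mx_apply n M v k)%C = 0%C) ->
  (forall k z, U z -> dzeta (Y k) z = mx_apply n M (fun j => dzeta (X j) z) k) ->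
  degenerate_on U m Y.
Proof.
  intros Ha HaM HY; exists a; split; [exact Ha |].
  intros z Hz; rewrite <- (HaM (fun j => dzeta (X j) z)).
  apply csum_ext; intros k _; now rewrite HY.
Qed.

Open Scope C_scope.

(* With [a = v0 - i v1] and [b = - v0 - i v1] (so [a = Psi] and [b = G^2 Psi] when [v = phi]),
   the rows send [v] to [s/2 (a + e b)], [c/2 (a - e b)], [i/2 (a + e b)] and [v2],
   where [e = 1/c^2]. *)
Definition tilde_mx (s c : R) (k j : nat) : C :=
  let e := RtoC (/ c ^ 2) in
  match k, j with
  | 0, 0 => s / 2 * (1 - e)
  | 0, 1 => - Ci * s / 2 * (1 + e)
  | 1, 0 => c / 2 * (1 + e)
  | 1, 1 => - Ci * c / 2 * (1 - e)
  | 2, 0 => Ci / 2 * (1 - e)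
  | 2, 1 => (1 + e) / 2
  | 3, 2 => 1
  | _, _ => 0
  end.

Definition tilde_form (s : R) (k : nat) : C :=
  match k with 0 => 1 | 2 => Ci * s | _ => 0 end.

Lemma RtoC_circle (s c : R) : (s ^ 2 + c ^ 2 = 1)%R -> RtoC s ^ 2 + RtoC c ^ 2 - 1 = 0.
Proof.
  intros H; rewrite <- !RtoC_pow, <- RtoC_plus, H.
  apply injective_projections; simpl; ring.
Qed.

Section TildeMatrix.

Variables (s c : R).
Hypothesis Hc : c <> 0%R.

Lemma tilde_mx_sum_sq (v : nat -> C) :
  csum 4 (fun k => mx_apply 3 (tilde_mx s c) v k ^ 2) =
  csum 3 (fun j => v j ^ 2) + (RtoC s ^ 2 + RtoC c ^ 2 - 1) * mx_apply 3 (tilde_mx 1 c) v 0 ^ 2.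
Proof.
  unfold mx_apply; cbn [csum tilde_mx].
  destruct (v 0%nat) as [a0 b0], (v 1%nat) as [a1 b1], (v 2%nat) as [a2 b2].
  apply injective_projections; simpl; field; exact Hc.
Qed.

Lemma tilde_mx_tr_mul (v : nat -> C) (j : nat) : (j < 3)%nat ->
  csum 4 (fun k => tilde_mx s c k j * mx_apply 3 (tilde_mx s c) v k) =
  v j + (RtoC s ^ 2 + RtoC c ^ 2 - 1) * tilde_mx 1 c 0 j * mx_apply 3 (tilde_mx 1 c) v 0.
Proof.
  intros Hj; unfold mx_apply.
  destruct j as [|[|[|j]]]; [| | | lia]; cbn [csum tilde_mx];
    destruct (v 0%nat) as [a0 b0], (v 1%nat) as [a1 b1], (v 2%nat) as [a2 b2];
    apply injective_projections; simpl; field; exact Hc.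
Qed.

Lemma tilde_form_mx (v : nat -> C) :
  csum 4 (fun k => tilde_form s k * mx_apply 3 (tilde_mx s c) v k) = 0.
Proof.
  unfold mx_apply; cbn [csum tilde_mx tilde_form].
  destruct (v 0%nat) as [a0 b0], (v 1%nat) as [a1 b1], (v 2%nat) as [a2 b2].
  apply injective_projections; simpl; field; exact Hc.
Qed.

Hypothesis Hsc : (s ^ 2 + c ^ 2 = 1)%R.

Lemma tilde_mx_null (v : nat -> C) :
  csum 4 (fun k => mx_apply 3 (tilde_mx s c) v k ^ 2) = csum 3 (fun j => v j ^ 2).
Proof. rewrite tilde_mx_sum_sq, (RtoC_circle s c Hsc); ring. Qed.

Lemma tilde_mx_nonzero (v : nat -> C) :
  (exists j, (j < 3)%nat /\ v j <> 0) ->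
  exists k, (k < 4)%nat /\ mx_apply 3 (tilde_mx s c) v k <> 0.
Proof.
  intros [j [Hj Hvj]]; apply NNPP; intros Hnone; apply Hvj.
  assert (Hrow : forall k, (k < 4)%nat -> mx_apply 3 (tilde_mx s c) v k = 0).
  { intros k Hk; destruct (Ceq_dec (mx_apply 3 (tilde_mx s c) v k) 0) as [H0 | H0];
      [exact H0 | exfalso; eauto]. }
  assert (Hinv := tilde_mx_tr_mul v j Hj); cbn [csum] in Hinv.
  rewrite !Hrow, (RtoC_circle s c Hsc) in Hinv by lia.
  replace (v j) with (v j + 0 * tilde_mx 1 c 0 j * mx_apply 3 (tilde_mx 1 c) v 0) by ring.
  rewrite <- Hinv; ring.
Qed.

End TildeMatrix.

Lemma tilde_mx_weierstrass (theta : R) (G Psi : C -> C) (k : nat) (z : C) :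
  cos theta <> 0%R -> (k < 4)%nat ->
  mx_apply 3 (tilde_mx (sin theta) (cos theta)) (fun j => weierstrass_phi G Psi j z) k =
  tilde_phi theta G Psi k z.
Proof.
  intros Hc Hk; unfold mx_apply, tilde_phi, weierstrass_phi.
  destruct (G z) as [g1 g2], (Psi z) as [p1 p2].
  destruct k as [|[|[|[|k]]]]; [| | | | lia]; cbn [csum tilde_mx];
    apply injective_projections; simpl; field; exact Hc.
Qed.

Close Scope C_scope.

Theorem corollary5p4
  (U : C -> Prop) (P : C -> Prop) (G Psi : C -> C)
  (phi : nat -> C -> C) (X : nat -> C -> R) (theta : R) :
  simply_connected_domain U ->
  (* Weierstrass data: Psi holomorphic, G meromorphic with poles in the
     discrete set P; phi holomorphic and given by the formula off P *)
  discrete_in U P ->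
  holomorphic_on U Psi ->
  holomorphic_on (fun z => U z /\ ~ P z) G ->
  (forall k, (k < 3)%nat -> holomorphic_on U (phi k)) ->
  (forall k z, (k < 3)%nat -> U z -> ~ P z -> phi k z = weierstrass_phi G Psi k z) ->
  (* Sigma : the minimal surface X = Re \int phi in R^3 *)
  Re_integral_param U 3 phi X ->
  conformal_harmonic_immersion U 3 X ->
  - (PI / 2) < theta < PI / 2 ->
  exists (tphi : nat -> C -> C) (Xt : nat -> C -> R),
    (forall k, (k < 4)%nat -> holomorphic_on U (tphi k)) /\
    (forall k z, (k < 4)%nat -> U z -> ~ P z -> tphi k z = tilde_phi theta G Psi k z) /\
    Re_integral_param U 4 tphi Xt /\
    conformal_harmonic_immersion U 4 Xt /\
    degenerate_on U 4 Xt.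
Proof.
  intros [_ [HU _]] _ _ _ Hphi Hphiw [F HF] [HXh [HXc HXi]] Htheta.
  assert (Hc : cos theta <> 0) by (apply Rgt_not_eq, cos_gt_0; lra).
  assert (Hsc : sin theta ^ 2 + cos theta ^ 2 = 1)
    by (rewrite <- (sin2_cos2 theta); unfold Rsqr; ring).
  set (M := tilde_mx (sin theta) (cos theta)).
  assert (HdM := dzeta_mx_map U 3 M phi F X HU HF).
  exists (mx_map 3 M phi), (fun k w => Re (mx_map 3 M F k w)).
  split; [intros k _; exact (holomorphic_mx_map U 3 M phi Hphi k) |].
  split.
  { intros k z Hk Hz HPz; rewrite <- tilde_mx_weierstrass by assumption.
    apply mx_apply_ext; intros j Hj; apply Hphiw; assumption. }
  split; [exact (Re_integral_param_mx_map U 3 M phi F X HF 4) |].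
  split; [split; [exact (harmonic_mx_map U 3 M phi F X HU Hphi HF 4 HXh) |] |].
  - exact (conformal_immersion_of_dzeta_map U 3 4 M X _
      (tilde_mx_null _ _ Hc Hsc) (tilde_mx_nonzero _ _ Hc Hsc) HdM HXc HXi).
  - refine (degenerate_on_of_dzeta_map U 3 4 M X _ (tilde_form (sin theta)) _
      (tilde_form_mx _ _ Hc) HdM).
    exists 0%nat; split; [lia | exact C1_nz].
Qed.
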